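(* Let $\mathbb{M}$ be a flow monoid with idempotent addition, and let $h_1,h_2$ be flow graphs with the same node set $X$ whose edge functions are continuous and distributive. Then $\mathsf{tf}(h_1)=\mathsf{tf}(h_2)$ if and only if path replacement of $h_1$ by $h_2$ and path replacement of $h_2$ by $h_1$ both hold.
   Context: A flow monoid is a commutative monoid $(\mathbb{M},+,0)$ such that $n\le m :\iff \exists o.\ m=n+o$ is a partial order in which every ascending chain $K$ has a least upper bound $\bigsqcup K$, and $n+\bigsqcup K=\bigsqcup(n+K)$. Addition is idempotent if $m+m=m$. A function is continuous if it commutes with least upper bounds of ascending chains, and distributive if $f(m+n)=f(m)+f(n)$ and $f(0)=0$. Infinite sums denote least upper bounds of finite partial sums; sums and $\le$ on functions are pointwise. A flow graph is $h=(X,E,\mathit{in})$ with $X\subseteq\mathbb{N}$ finite, $E:X\times\mathbb{N}\to$ continuous functions $\mathbb{M}\to\mathbb{M}$, $\mathit{in}:(\mathbb{N}\setminus X)\times X\to\mathbb{M}$; $\mathit{in}_x=\sum_{y\notin X}\mathit{in}(y,x)$; the flow is the least $\mathit{flow}:X\to\mathbb{M}$ with $\mathit{flow}(x)=\mathit{in}_x+\sum_{y\in X}E(y,x)(\mathit{flow}(y))$; outflow $\mathit{out}(x,y)=E(x,y)(\mathit{flow}(x))$. The transfer function $\mathsf{tf}(h)$ maps each inflow $\mathit{in}'$ to the outflow of $(X,E,\mathit{in}')$; $\mathsf{tf}(h_1)=\mathsf{tf}(h_2)$ means equality for all inflows. A path through $h$ is $p=x_0\cdots x_nz$ with $x_i\in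 X$, $z\in\mathbb{N}\setminus X$; $\mathrm{Paths}_h(x\to(y,z))$ is the set of such paths with $x_0=x$, $x_n=y$, final element $z$; $E_p=E(x_n,z)\circ\cdots\circ E(x_0,x_1)$; $E_P=\sum_{q\in P}E_q$. $\mathrm{Out}(h_1,h_2)=\{x\in X\mid\exists z.\ h_1.E(x,z)\neq h_2.E(x,z)\}$. Path replacement of $h_1$ by $h_2$: for every $x\in\mathrm{Out}(h_1,h_2)$, $y\in X$, $z\in\mathbb{N}\setminus X$ and every $p\in\mathrm{Paths}_{h_1}(x\to(y,z))$ there is $P\subseteq\mathrm{Paths}_{h_2}(x\to(y,z))$ with $E_p\le E_P$. *)

From mathcomp Require Import all_boot.
From mathcomp Require Import finmap.
Set Implicit Arguments.
Unset Strict Implicit.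
Unset Printing Implicit Defensive.
Local Open Scope fset_scope.

Section FlowMonoid.
Variables (M : Type) (add : M -> M -> M) (zero : M).

Definition mle (n m : M) : Prop := exists o, m = add n o.

Definition is_lub (S : M -> Prop) (l : M) : Prop :=
  (forall v, S v -> mle v l) /\ (forall u, (forall v, S v -> mle v u) -> mle l u).

Definition asc_chain (k : nat -> M) : Prop := forall i, mle (k i) (k i.+1).

Definition chain_set (k : nat -> M) : M -> Prop := fun v => exists i, v = k i.

Definition flow_monoid : Prop :=
  [/\ (forall a b c, add a (add b c) = add (add a b) c),
      (forall a b, add a b = add b a) /\
      (forall a, add zero a = a),
      (* mle is a partial order (reflexivity and transitivity are automatic) *)
      (forall a b, mle a b -> mle b a -> a = b),
      (forall k, asc_chain k -> exists l, is_lub (chain_set k) l) &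
      (forall n k l, asc_chain k -> is_lub (chain_set k) l ->
          is_lub (chain_set (fun i => add n (k i))) (add n l))].

Definition idempotent_add : Prop := forall m, add m m = m.

Definition continuous_fun (f : M -> M) : Prop :=
  forall k l, asc_chain k -> is_lub (chain_set k) l ->
    is_lub (chain_set (fun i => f (k i))) (f l).

Definition distributive_fun (f : M -> M) : Prop :=
  (forall m n, f (add m n) = add (f m) (f n)) /\ f zero = zero.

Definition lsum (l : seq M) : M := foldr add zero l.

Definition isum (I : eqType) (P : I -> Prop) (g : I -> M) (s : M) : Prop :=
  is_lub (fun v => exists l : seq I, [/\ uniq l, (forall i, i \in l -> P i) &
                                         v = lsum (map g l)]) s.

End FlowMonoid.

Record flow_graph (M : Type) := FlowGraph {
  fg_X  : {fset nat};
  fg_E  : nat -> nat -> M -> M;   (* only used on X x N *)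
  fg_in : nat -> nat -> M         (* only used on (N \ X) x X *)
}.

Section Flows.
Variables (M : Type) (add : M -> M -> M) (zero : M).

(* f : X -> M (values outside X irrelevant) satisfies the flow equation
   f(x) = in_x + sum_{y in X} E(y,x)(f(y)),  in_x = sum_{y notin X} in(y,x) *)
Definition flow_eq (X : {fset nat}) (E : nat -> nat -> M -> M)
    (inf : nat -> nat -> M) (f : nat -> M) : Prop :=
  forall x, x \in X ->
    exists ix, isum add zero (fun y : nat => y \notin X) (fun y => inf y x) ix /\
      f x = add ix (lsum add zero [seq E y x (f y) | y <- enum_fset X]).

Definition is_flow X E inf (f : nat -> M) : Prop :=
  flow_eq X E inf f /\
  forall f', flow_eq X E inf f' -> forall x, x \in X -> mle add (f x) (f' x).

(* tf(h1) = tf(h2): for every inflow in', the outflows of (X,E1,in') and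
   (X,E2,in') coincide, out(x,y) = E(x,y)(flow(x)) for x in X, y notin X *)
Definition tf_eq (h1 h2 : flow_graph M) : Prop :=
  forall inf f1 f2,
    is_flow (fg_X h1) (fg_E h1) inf f1 ->
    is_flow (fg_X h2) (fg_E h2) inf f2 ->
    forall x y, x \in fg_X h1 -> y \notin fg_X h1 ->
      fg_E h1 x y (f1 x) = fg_E h2 x y (f2 x).

(* A path x0 ... xn z is represented by the list x0 :: x1 :: ... :: xn :: [z].
   path_fun E a r = E_p for p = a :: r, i.e. E(xn,z) o ... o E(x0,x1). *)
Fixpoint path_fun (E : nat -> nat -> M -> M) (a : nat) (r : seq nat) : M -> M :=
  match r with
  | [::] => id
  | b :: r' => fun m => path_fun E b r' (E a b m)
  end.

Definition E_path (E : nat -> nat -> M -> M) (p : seq nat) : M -> M :=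
  match p with
  | [::] => id
  | a :: r => path_fun E a r
  end.

Definition is_path (X : {fset nat}) (x y z : nat) (p : seq nat) : Prop :=
  exists xs : seq nat,
    [/\ p = x :: rcons xs z, x \in X, (forall w, w \in xs -> w \in X),
        last x xs = y & z \notin X].

Definition in_Out (h1 h2 : flow_graph M) (x : nat) : Prop :=
  x \in fg_X h1 /\ exists z, fg_E h1 x z <> fg_E h2 x z.

Definition path_replacement (h1 h2 : flow_graph M) : Prop :=
  forall x y z p,
    in_Out h1 h2 x -> y \in fg_X h1 -> z \notin fg_X h1 ->
    is_path (fg_X h1) x y z p ->
    exists P : seq nat -> Prop,
      (forall q, P q -> is_path (fg_X h2) x y z q) /\
      forall m, exists s,
        isum add zero P (fun q => E_path (fg_E h2) q m) s /\
        mle add (E_path (fg_E h1) p m) s.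

End Flows.

From mathcomp Require Import all_boot.
From mathcomp Require Import finmap.
From Stdlib Require Import Classical IndefiniteDescription.
Set Implicit Arguments.
Unset Strict Implicit.
Unset Printing Implicit Defensive.
Local Open Scope fset_scope.

(* With idempotent addition the order is a join-semilattice order:
   a <= b iff a + b = b, and sums are joins.  The proof rests on two facts
   about a single flow graph.
   - Flow induction: the least flow is the supremum of the Kleene iterates
     of the flow equation, so any property of node values closed under
     going down, 0, +, suprema of chains, containing the inflows and
     propagated along edges holds of the flow.  Instantiated with
     "every path from w to the edge (y,z) maps v below B", it bounds path
     values by outflows, and conversely outflows by bounds on paths.
   - Outflow as a path sum: for an inflow m entering at a single node x,
     the outflow along (y,z) is the sum of E_q(m) over all paths q from x
     to (y,z).
   (=>) follows from the path-sum formula with P the set of all paths.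
   (<=) path replacement lets us transfer path bounds from h2 to h1 node by
   node (unchanged nodes propagate, changed nodes are replaced), whence
   out1 <= out2 and symmetrically; antisymmetry concludes. *)

Section Semilattice.
Variables (M : Type) (add : M -> M -> M) (zero : M).
Hypotheses (addA : associative add) (addC : commutative add)
  (add0 : left_id zero add) (addxx : idempotent_op add)
  (le_anti : forall a b, mle add a b -> mle add b a -> a = b)
  (chain_lubs : forall k, asc_chain add k -> exists l, is_lub add (chain_set k) l).

Local Notation "a ⊕ b" := (add a b) (at level 50, left associativity).
Local Notation "a ⊑ b" := (mle add a b) (at level 70, no associativity).
Local Notation sum := (lsum add zero).

Lemma le_def a b : a ⊑ b <-> a ⊕ b = b.
Proof. by split=> [[o ->]|<-]; [rewrite addA addxx | exists b]. Qed.

Lemma le_refl a : a ⊑ a.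
Proof. exact/le_def. Qed.

Lemma le_trans a b c : a ⊑ b -> b ⊑ c -> a ⊑ c.
Proof. by move=> /le_def ab /le_def bc; apply/le_def; rewrite -bc addA ab. Qed.

Lemma le0 a : zero ⊑ a.
Proof. by exists a; rewrite add0. Qed.

Lemma le_addl a b : a ⊑ a ⊕ b.
Proof. by exists b. Qed.

Lemma le_addr a b : b ⊑ a ⊕ b.
Proof. by rewrite addC; apply: le_addl. Qed.

Lemma add_lub a b u : a ⊑ u -> b ⊑ u -> a ⊕ b ⊑ u.
Proof. by move=> /le_def au /le_def bu; apply/le_def; rewrite -addA bu au. Qed.

Lemma add_mono a b a' b' : a ⊑ a' -> b ⊑ b' -> a ⊕ b ⊑ a' ⊕ b'.
Proof.
move=> aa' bb'; apply: add_lub.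
  exact: le_trans aa' (le_addl _ _).
exact: le_trans bb' (le_addr _ _).
Qed.

Lemma lub_unique S l l' : is_lub add S l -> is_lub add S l' -> l = l'.
Proof. by move=> [ub lst] [ub' lst']; apply: le_anti; [apply: lst | apply: lst']. Qed.

Lemma lsum_lub (I : eqType) (F : I -> M) (s : seq I) u :
  (forall i, i \in s -> F i ⊑ u) -> sum (map F s) ⊑ u.
Proof.
elim: s => [|i s IH] Fu /=; first exact: le0.
apply: add_lub; first by apply: Fu; rewrite mem_head.
by apply: IH => j js; apply: Fu; rewrite inE js orbT.
Qed.

Lemma le_lsum (I : eqType) (F : I -> M) (s : seq I) i :
  i \in s -> F i ⊑ sum (map F s).
Proof.
elim: s => [|j s IH] //=; rewrite inE => /orP [/eqP ->|i_s]; first exact: le_addl.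
exact: le_trans (IH i_s) (le_addr _ _).
Qed.

Lemma lsum_mono (I : eqType) (F G : I -> M) (s : seq I) :
  (forall i, i \in s -> F i ⊑ G i) -> sum (map F s) ⊑ sum (map G s).
Proof. by move=> FG; apply: lsum_lub => i i_s; apply: le_trans (FG i i_s) (le_lsum G i_s). Qed.

Lemma term_le_sum_bound (I : eqType) (P : I -> Prop) (g : I -> M) u i :
  (forall v, (exists l : seq I, [/\ uniq l, (forall j, j \in l -> P j) &
                                    v = sum (map g l)]) -> v ⊑ u) ->
  P i -> g i ⊑ u.
Proof.
move=> ub Pi; apply: le_trans (le_addl (g i) zero) (ub _ _).
by exists [:: i]; split=> // j; rewrite inE => /eqP ->.
Qed.

Lemma lub_shift k l : asc_chain add k -> is_lub add (chain_set k) l ->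
  is_lub add (chain_set (fun i => k i.+1)) l.
Proof.
move=> kup [ub lst]; split; first by move=> v [i ->]; apply: ub; exists i.+1.
move=> u uub; apply: lst => v [i ->].
by apply: le_trans (kup i) _; apply: uub; exists i.
Qed.

Lemma lub_add a b la lb :
  is_lub add (chain_set a) la -> is_lub add (chain_set b) lb ->
  is_lub add (chain_set (fun i => a i ⊕ b i)) (la ⊕ lb).
Proof.
move=> [uba lsta] [ubb lstb]; split.
  by move=> v [i ->]; apply: add_mono; [apply: uba | apply: ubb]; exists i.
move=> u uub; apply: add_lub.
  by apply: lsta => v [i ->]; apply: le_trans (le_addl _ (b i)) _; apply: uub; exists i.
by apply: lstb => v [i ->]; apply: le_trans (le_addr (a i) _) _; apply: uub; exists i.
Qed.

Lemma lub_const c : is_lub add (chain_set (fun _ : nat => c)) c.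
Proof. by split=> [v [_ ->]|u uub]; [apply: le_refl | apply: uub; exists 0]. Qed.

Lemma lub_lsum (I : eqType) (s : seq I) (a : I -> nat -> M) (la : I -> M) :
  (forall y, y \in s -> is_lub add (chain_set (a y)) (la y)) ->
  is_lub add (chain_set (fun i => sum (map (a^~ i) s))) (sum (map la s)).
Proof.
elim: s => [|y s IH] lubs /=; first exact: lub_const.
apply: lub_add; first by apply: lubs; rewrite mem_head.
by apply: IH => w ws; apply: lubs; rewrite inE ws orbT.
Qed.


Definition cont_distr (f : M -> M) : Prop :=
  continuous_fun add f /\ distributive_fun add zero f.

Lemma cont_distr_mono f a b : cont_distr f -> a ⊑ b -> f a ⊑ f b.
Proof. by move=> [_ [fD _]] /le_def ab; apply/le_def; rewrite -fD ab. Qed.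

Lemma cont_distr_comp f g :
  cont_distr f -> cont_distr g -> cont_distr (fun m => g (f m)).
Proof.
move=> [fC [fD f0]] [gC [gD g0]]; split; last by split=> [a b|]; rewrite ?fD ?gD ?f0.
move=> k l kup kl; apply: gC (fC k l kup kl) => i.
by have [o ->] := kup i; exists (f o); rewrite fD.
Qed.

Section FlowGraph.
Variables (X : {fset nat}) (E : nat -> nat -> M -> M).
Hypothesis E_cd : forall a b, a \in X -> cont_distr (E a b).

Local Notation inflow inf w ix :=
  (isum add zero (fun a : nat => a \notin X) (fun a => inf a w) ix).

Lemma path_cont_distr w xs z : w \in X -> (forall u, u \in xs -> u \in X) ->
  cont_distr (path_fun E w (rcons xs z)).
Proof.
elim: xs w => [|b xs IH] w wX xsX /=; first exact: E_cd.
apply: cont_distr_comp (E_cd _ wX) (IH _ _ _); first by apply: xsX; rewrite mem_head.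
by move=> u u_xs; apply: xsX; rewrite inE u_xs orbT.
Qed.

Lemma is_path_cont_distr w y z p : is_path X w y z p -> cont_distr (E_path E p).
Proof. by case=> xs [-> wX xsX _ _]; apply: path_cont_distr. Qed.

Lemma is_path_cons w w' y z p :
  w' \in X -> is_path X w y z p -> is_path X w' y z (w' :: p).
Proof.
move=> w'X [xs [-> wX xsX <- zX]]; exists (w :: xs); split=> //.
by move=> u; rewrite inE => /orP [/eqP ->|/xsX].
Qed.

Lemma edge_is_path y z : y \in X -> z \notin X -> is_path X y y z [:: y; z].
Proof. by move=> yX zX; exists [::]. Qed.

Fixpoint kleene_iter (ixf : nat -> M) (k : nat) : nat -> M :=
  if k is k'.+1 then
    fun x => ixf x ⊕ sum [seq E y x (kleene_iter ixf k' y) | y <- enum_fset X]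
  else fun _ => zero.

Lemma kleene_iter_chain ixf x : asc_chain add (fun k => kleene_iter ixf k x).
Proof.
move=> k; elim: k x => [|k IH] x; first exact: le0.
apply: add_mono (le_refl _) (lsum_mono _) => y yX.
exact: cont_distr_mono (E_cd _ yX) (IH y).
Qed.

Lemma kleene_flow inf ixf :
  (forall x, x \in X -> inflow inf x (ixf x)) ->
  exists g, is_flow add zero X E inf g /\
    forall x, is_lub add (chain_set (fun k => kleene_iter ixf k x)) (g x).
Proof.
move=> ixfP; have [g gP] := functional_choice _ (fun x => chain_lubs (kleene_iter_chain ixf x)).
exists g; split=> //; split.
  move=> x xX; exists (ixf x); split; first exact: ixfP.
  apply: lub_unique (lub_shift (kleene_iter_chain ixf x) (gP x)) _.
  apply: lub_add (lub_const _) (lub_lsum (a := fun y k => E y x (kleene_iter ixf k y)) _).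
  by move=> y yX; apply: (E_cd _ yX).1 (kleene_iter_chain _ _) (gP y).
move=> f' f'P x xX; apply: (gP x).2 => _ [k ->].
elim: k x xX => [|k IH] x xX; first exact: le0.
have [ix' [ix'P ->]] := f'P x xX; rewrite -(lub_unique (ixfP x xX) ix'P) /=.
apply: add_mono (le_refl _) (lsum_mono _) => y yX.
exact: cont_distr_mono (E_cd _ yX) (IH y yX).
Qed.

Lemma flow_ind inf f (R : nat -> M -> Prop) :
  is_flow add zero X E inf f ->
  (forall w a b, a ⊑ b -> R w b -> R w a) ->
  (forall w, R w zero) ->
  (forall w a b, R w a -> R w b -> R w (a ⊕ b)) ->
  (forall w k l, asc_chain add k -> is_lub add (chain_set k) l ->
     (forall i, R w (k i)) -> R w l) ->
  (forall w ix, w \in X -> inflow inf w ix -> R w ix) ->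
  (forall w' w v, w' \in X -> w \in X -> R w' v -> R w (E w' w v)) ->
  forall w, w \in X -> R w (f w).
Proof.
move=> [fP fleast] Rdown R0 Radd Rlub Rin Redge.
have [ixf ixfP] : exists ixf, forall x, x \in X -> inflow inf x (ixf x).
  apply: (functional_choice (fun x ix => x \in X -> inflow inf x ix)) => x.
  have [xX|xNX] := boolP (x \in X); last by exists zero.
  by have [ix [ixP _]] := fP x xX; exists ix.
have [g [[gP _] glub]] := kleene_flow ixfP.
have Rsum w (s : seq nat) (F : nat -> M) :
    (forall u, u \in s -> R w (F u)) -> R w (sum (map F s)).
  elim: s => [|u s IH] Fs /=; first exact: R0.
  apply: Radd; first by apply: Fs; rewrite mem_head.
  by apply: IH => u' u's; apply: Fs; rewrite inE u's orbT.
have Riter k w : w \in X -> R w (kleene_iter ixf k w).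
  elim: k w => [|k IH] w wX; first exact: R0.
  apply: Radd _ _ _ (Rin _ _ wX (ixfP w wX)) (Rsum _ _ _ _) => u uX.
  exact: Redge _ _ _ uX wX (IH u uX).
move=> w wX; apply: (Rdown _ _ _ (fleast g gP w wX)).
exact: (Rlub _ _ _ (kleene_iter_chain ixf w) (glub w) (fun i => Riter i w wX)).
Qed.

Definition path_bounded (y z : nat) (B : M) (w : nat) (v : M) : Prop :=
  forall p, is_path X w y z p -> E_path E p v ⊑ B.

(* Path bounds propagate along an edge w' -> w: a path from w extends to a
   path from w'. *)
Lemma path_bounded_edge y z B w' w v :
  w' \in X -> path_bounded y z B w' v -> path_bounded y z B w (E w' w v).
Proof.
move=> w'X bnd p pP; have := bnd _ (is_path_cons w'X pP).
by case: pP => xs [-> _ _ _ _].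
Qed.

Lemma path_bounded_flow inf f y z B :
  is_flow add zero X E inf f ->
  (forall w ix, w \in X -> inflow inf w ix -> path_bounded y z B w ix) ->
  forall w, w \in X -> path_bounded y z B w (f w).
Proof.
move=> fP bnd_in; apply: flow_ind fP _ _ _ _ bnd_in _.
- move=> w a b ab bnd p pP.
  exact: le_trans (cont_distr_mono (is_path_cont_distr pP) ab) (bnd p pP).
- by move=> w p pP; rewrite (is_path_cont_distr pP).2.2; apply: le0.
- move=> w a b bnda bndb p pP; rewrite (is_path_cont_distr pP).2.1.
  exact: add_lub (bnda p pP) (bndb p pP).
- move=> w k l kup kl bnd p pP.
  by apply: ((is_path_cont_distr pP).1 k l kup kl).2 => _ [i ->]; apply: bnd.
- by move=> w' w v w'X _; apply: path_bounded_edge.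
Qed.

Lemma inflow_le_flow inf f x ix :
  flow_eq add zero X E inf f -> x \in X -> inflow inf x ix -> ix ⊑ f x.
Proof.
move=> fP xX ixP; have [ix' [ix'P ->]] := fP x xX.
by rewrite (lub_unique ixP ix'P); apply: le_addl.
Qed.

Lemma path_le_outflow inf f w y z p :
  flow_eq add zero X E inf f -> is_path X w y z p -> E_path E p (f w) ⊑ E y z (f y).
Proof.
move=> fP [xs [-> wX xsX <- _]].
elim: xs w wX xsX => [|b xs IH] w wX xsX /=; first exact: le_refl.
have bX : b \in X by apply: xsX; rewrite mem_head.
have xsX' : forall u, u \in xs -> u \in X.
  by move=> u u_xs; apply: xsX; rewrite inE u_xs orbT.
apply: le_trans (IH b bX xsX'); apply: cont_distr_mono (path_cont_distr _ bX xsX') _.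
have [ix [_ ->]] := fP b bX; apply: le_trans (le_addr _ _).
exact: (le_lsum (fun u => E u b (f u)) wX).
Qed.

Definition point_inflow (z0 x : nat) (m : M) : nat -> nat -> M :=
  fun a b => if (a == z0) && (b == x) then m else zero.

Lemma point_inflow_sum z0 x m w : z0 \notin X ->
  inflow (point_inflow z0 x m) w (if w == x then m else zero).
Proof.
move=> z0X; split.
  move=> _ [l [_ _ ->]]; apply: lsum_lub => a _; rewrite /point_inflow.
  by case: (a == z0); case: (w == x); [apply: le_refl | apply: le0 ..].
move=> u uub; have := term_le_sum_bound uub z0X.
by rewrite /point_inflow eqxx.
Qed.

Lemma point_inflow_outflow z0 x m f y z :
  z0 \notin X -> x \in X -> y \in X -> z \notin X ->
  is_flow add zero X E (point_inflow z0 x m) f ->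
  isum add zero (is_path X x y z) (fun q => E_path E q m) (E y z (f y)).
Proof.
move=> z0X xX yX zX [fP fleast]; split.
  move=> _ [l [_ l_paths ->]]; apply: lsum_lub => q /l_paths qP.
  have m_le : m ⊑ f x.
    by have := inflow_le_flow fP xX (point_inflow_sum x m x z0X); rewrite eqxx.
  exact: le_trans (cont_distr_mono (is_path_cont_distr qP) m_le) (path_le_outflow fP qP).
move=> u uub; apply: (path_bounded_flow (conj fP fleast) _ yX (edge_is_path yX zX)).
move=> w ix wX ixP q qP; rewrite (lub_unique ixP (point_inflow_sum x m w z0X)).
case: eqP qP => [-> qP|_ qP]; first exact: term_le_sum_bound uub qP.
by rewrite (is_path_cont_distr qP).2.2; apply: le0.
Qed.

End FlowGraph.

Definition replaces_towards (X : {fset nat}) (E1 E2 : nat -> nat -> M -> M)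
    (y z : nat) : Prop :=
  forall w p, w \in X -> (exists z', E1 w z' <> E2 w z') -> is_path X w y z p ->
    exists P : seq nat -> Prop, (forall q, P q -> is_path X w y z q) /\
      forall m, exists s, isum add zero P (fun q => E_path E2 q m) s /\
        E_path E1 p m ⊑ s.

(* Path bounds for E2 transfer to E1: unchanged nodes pass the bound along
   their first edge, changed nodes are handled by path replacement. *)
Lemma path_bounded_transfer X E1 E2 y z B w v :
  replaces_towards X E1 E2 y z -> w \in X ->
  path_bounded X E2 y z B w v -> path_bounded X E1 y z B w v.
Proof.
move=> repl wX bnd _ [xs [-> _ xsX lastw zX]].
have replaced w' v' xs' : w' \in X -> (exists z', E1 w' z' <> E2 w' z') ->
    (forall u, u \in xs' -> u \in X) -> last w' xs' = y ->
    path_bounded X E2 y z B w' v' -> E_path E1 (w' :: rcons xs' z) v' ⊑ B.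
  move=> w'X changed xs'X lastw' bnd'.
  have pP : is_path X w' y z (w' :: rcons xs' z) by exists xs'.
  have [P [P_paths Psum]] := repl _ _ w'X changed pP.
  have [s [sP le_s]] := Psum v'; apply: le_trans le_s (sP.2 _ _).
  by move=> _ [l [_ lP ->]]; apply: lsum_lub => q /lP /P_paths /bnd'.
elim: xs w v wX xsX lastw bnd => [|b xs IH] w v wX xsX lastw bnd;
  (have [changed|/not_ex_not_all same] := classic (exists z', E1 w z' <> E2 w z');
   first exact: replaced wX changed xsX lastw bnd).
  by rewrite /= same; apply: (bnd [:: w; z]); exists [::].
rewrite /= same; apply: IH lastw (path_bounded_edge wX bnd).
  by apply: xsX; rewrite mem_head.
by move=> u u_xs; apply: xsX; rewrite inE u_xs orbT.
Qed.

Definition graph_cd (h : flow_graph M) : Prop :=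
  forall x z, x \in fg_X h -> cont_distr (fg_E h x z).

Lemma replacement_outflow_le (h1 h2 : flow_graph M) :
  fg_X h2 = fg_X h1 -> graph_cd h1 -> graph_cd h2 ->
  path_replacement add zero h1 h2 ->
  forall inf f1 f2, is_flow add zero (fg_X h1) (fg_E h1) inf f1 ->
    is_flow add zero (fg_X h2) (fg_E h2) inf f2 ->
  forall x y, x \in fg_X h1 -> y \notin fg_X h1 ->
    fg_E h1 x y (f1 x) ⊑ fg_E h2 x y (f2 x).
Proof.
case: h1 h2 => [X E1 in1] [X2 E2 in2].
rewrite /graph_cd /path_replacement /in_Out /= => -> cd1 cd2 repl inf f1 f2 fl1 fl2 x y xX yX.
have repl_xy : replaces_towards X E1 E2 x y.
  by move=> w p wX changed pP; apply: repl (conj wX changed) xX yX pP.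
have inflow_bounded w ix : w \in X ->
    isum add zero (fun a : nat => a \notin X) (inf^~ w) ix ->
    path_bounded X E2 x y (E2 x y (f2 x)) w ix.
  move=> wX ixP q qP; apply: le_trans (path_le_outflow cd2 fl2.1 qP).
  exact: cont_distr_mono (is_path_cont_distr cd2 qP) (inflow_le_flow fl2.1 wX ixP).
apply: (path_bounded_flow cd1 fl1 _ xX (edge_is_path xX yX)) => w ix wX ixP.
exact: path_bounded_transfer repl_xy wX (inflow_bounded w ix wX ixP).
Qed.

(* (=>): with a point inflow m at x, both outflows along (y,z) are path sums
   of m, so P = all paths of h2 replaces any path of h1. *)
Lemma tf_eq_replacement (h1 h2 : flow_graph M) :
  fg_X h2 = fg_X h1 -> graph_cd h1 -> graph_cd h2 ->
  tf_eq add zero h1 h2 -> path_replacement add zero h1 h2.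
Proof.
case: h1 h2 => [X E1 in1] [X2 E2 in2].
rewrite /graph_cd /tf_eq /path_replacement /= => -> cd1 cd2 tf x y z p [xX _] yX zX pP.
exists (is_path X x y z); split=> // m.
pose ixf w := if w == x then m else zero.
have [g1 [fl1 _]] := kleene_flow cd1 (ixf := ixf) (fun w _ => point_inflow_sum x m w zX).
have [g2 [fl2 _]] := kleene_flow cd2 (ixf := ixf) (fun w _ => point_inflow_sum x m w zX).
exists (E2 y z (g2 y)); split.
  exact: (point_inflow_outflow cd2 zX xX yX zX fl2).
rewrite -(tf _ _ _ fl1 fl2 y z yX zX).
exact: term_le_sum_bound (point_inflow_outflow cd1 zX xX yX zX fl1).1 pP.
Qed.

Lemma tf_eq_sym (h1 h2 : flow_graph M) :
  fg_X h1 = fg_X h2 -> tf_eq add zero h1 h2 -> tf_eq add zero h2 h1.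
Proof.
move=> sameX tf inf f2 f1 fl2 fl1 x y; rewrite -sameX => xX yX.
by rewrite (tf _ _ _ fl1 fl2 _ _ xX yX).
Qed.

Lemma tf_eq_iff_replacement (h1 h2 : flow_graph M) :
  fg_X h1 = fg_X h2 -> graph_cd h1 -> graph_cd h2 ->
  tf_eq add zero h1 h2 <->
  path_replacement add zero h1 h2 /\ path_replacement add zero h2 h1.
Proof.
move=> sameX cd1 cd2; split.
  move=> tf; split; first exact: tf_eq_replacement (esym sameX) cd1 cd2 tf.
  exact: tf_eq_replacement sameX cd2 cd1 (tf_eq_sym sameX tf).
move=> [repl12 repl21] inf f1 f2 fl1 fl2 x y xX yX.
have [xX2 yX2] : x \in fg_X h2 /\ y \notin fg_X h2 by rewrite -sameX.
apply: le_anti.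
  exact: replacement_outflow_le (esym sameX) cd1 cd2 repl12 _ _ _ fl1 fl2 _ _ xX yX.
exact: replacement_outflow_le sameX cd2 cd1 repl21 _ _ _ fl2 fl1 _ _ xX2 yX2.
Qed.

End Semilattice.

Theorem theorem4 (M : Type) (add : M -> M -> M) (zero : M)
    (h1 h2 : flow_graph M) :
  flow_monoid add zero ->
  idempotent_add add ->
  fg_X h1 = fg_X h2 ->
  (forall x z, x \in fg_X h1 ->
     continuous_fun add (fg_E h1 x z) /\ distributive_fun add zero (fg_E h1 x z)) ->
  (forall x z, x \in fg_X h2 ->
     continuous_fun add (fg_E h2 x z) /\ distributive_fun add zero (fg_E h2 x z)) ->
  (tf_eq add zero h1 h2 <->
   path_replacement add zero h1 h2 /\ path_replacement add zero h2 h1).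
Proof.
move=> [addA [addC add0] le_anti chain_lubs _] addxx.
exact: (tf_eq_iff_replacement addA addC add0 addxx le_anti chain_lubs).
Qed.
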